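(* Under the standing setup, for every $u\in\widetilde X$ there exists $z^*\in\mathbb{R}^m$ with $\|z^*\|\le\|u-u_{NN}\|$ and \[\tilde g_i(z^*,u)\le-\frac{\varepsilon}{60}\|u-u_{NN}\|\quad\forall\,i=1,\ldots,2\ell.\]
   Context: Norms are Euclidean. Standing setup: $X\subseteq\mathbb{R}^d$ has reach $\tau_X>0$, where $\tau_X=\sup\{t\ge0:\text{every }x\text{ with }d(x,X)<t\text{ has a unique closest point in }\overline X\}$; $\widetilde X=X+B(0,\tau_X/2)$; for $u\in\widetilde X$, $u_{NN}$ is the unique closest point to $u$ in $\overline X$. $\varepsilon\in(0,1)$. $S_X=\overline{\{(x-y)/\|x-y\|:x\ne y\in X\}}$. A linear $\Pi\colon\mathbb{R}^d\to\mathbb{R}^m$ provides $\eta$-convex hull distortion for $T\subseteq S^{d-1}$ if $|\,\|\Pi x\|-\|x\|\,|<\eta$ for all $x\in\operatorname{conv}(T)$. $\{w_1,\ldots,w_\ell\}\subseteq S_X$ is finite; $\Pi\in\mathbb{R}^{m\times d}$ provides $\frac{\varepsilon}{60}$-convex hull distortion for $S_X$ (e.g. it provides $\frac{\varepsilon}{240}$-convex hull distortion). For $z\in\mathbb{R}^m$, $u\in\widetilde X$, $i=1,\ldots,\ell$: $\tilde g_i(z,u)=\langle z,\Pi w_i\rangle-\langle u-u_{NN},w_i\rangle-\frac{\varepsilon}{30}\|u-u_{NN}\|$, $\tilde g_{\ell+i}(z,u)=\langle u-u_{NN},w_i\rangle-\langle z,\Pi w_i\rangle-\frac{\varepsilon}{30}\|u-u_{NN}\|$.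 *)

From HB Require Import structures.
From mathcomp Require Import all_boot all_order all_algebra.
From mathcomp Require Import boolp classical_sets reals constructive_ereal ereal.
Set Implicit Arguments. Unset Strict Implicit. Unset Printing Implicit Defensive.
Import Order.TTheory GRing.Theory Num.Theory.
Local Open Scope classical_set_scope.
Local Open Scope ring_scope.

Section Defs.
Variable R : realType.

Definition dotv (n : nat) (u v : 'cV[R]_n) : R := \sum_(i < n) u i 0 * v i 0.
Definition enorm (n : nat) (v : 'cV[R]_n) : R := Num.sqrt (dotv v v).

Definition eclosure (n : nat) (X : set 'cV[R]_n) : set 'cV[R]_n :=
  [set y | forall e : R, 0 < e -> exists2 x, X x & enorm (y - x) < e].

Definition edist (n : nat) (x : 'cV[R]_n) (X : set 'cV[R]_n) : R :=
  inf [set enorm (x - y) | y in X].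

Definition closest (n : nat) (X : set 'cV[R]_n) (x y : 'cV[R]_n) : Prop :=
  eclosure X y /\ forall z, eclosure X z -> enorm (x - y) <= enorm (x - z).

Definition has_unique_nn (n : nat) (X : set 'cV[R]_n) (x : 'cV[R]_n) : Prop :=
  exists! y, closest X x y.

Definition reach (n : nat) (X : set 'cV[R]_n) : \bar R :=
  ereal_sup [set t%:E | t in
    [set t : R | 0 <= t /\ forall x, edist x X < t -> has_unique_nn X x]].

(* tilde X = X + B(0, tau_X / 2) (open ball) *)
Definition tube (n : nat) (X : set 'cV[R]_n) : set 'cV[R]_n :=
  [set u | exists2 x, X x & ((enorm (u - x))%:E < reach X * (2^-1)%:E)%E].

(* u_NN : the (unique, for u in tilde X) closest point to u in cl X *)
Definition nnpt (n : nat) (X : set 'cV[R]_n) (u : 'cV[R]_n) : 'cV[R]_n :=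
  xget 0 [set y | closest X u y].

Definition secants (n : nat) (X : set 'cV[R]_n) : set 'cV[R]_n :=
  eclosure [set v | exists x y, [/\ X x, X y, x <> y
                                  & v = (enorm (x - y))^-1 *: (x - y)]].

Definition convhull (n : nat) (T : set 'cV[R]_n) : set 'cV[R]_n :=
  [set x | exists (k : nat) (c : 'I_k -> R) (t : 'I_k -> 'cV[R]_n),
      [/\ forall i, 0 <= c i, \sum_(i < k) c i = 1, forall i, T (t i)
        & x = \sum_(i < k) c i *: t i]].

Definition cvx_hull_distortion (m d : nat) (Pi : 'M[R]_(m, d)) (eta : R)
    (T : set 'cV[R]_d) : Prop :=
  forall x, convhull T x -> `| enorm (Pi *m x) - enorm x | < eta.

(* the functions tilde g_i, i in 'I_(l + l) (i < l : first family,
   i >= l : second family) *)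
Definition gtilde (m d l : nat) (Pi : 'M[R]_(m, d)) (w : 'I_l -> 'cV[R]_d)
    (eps : R) (X : set 'cV[R]_d) (i : 'I_(l + l)) (z : 'cV[R]_m)
    (u : 'cV[R]_d) : R :=
  let r := u - nnpt X u in
  match split i with
  | inl j => dotv z (Pi *m w j) - dotv r (w j) - eps / 30 * enorm r
  | inr j => dotv r (w j) - dotv z (Pi *m w j) - eps / 30 * enorm r
  end.

End Defs.

From HB Require Import structures.
From mathcomp Require Import all_boot all_order all_algebra.
From mathcomp Require Import boolp classical_sets reals constructive_ereal ereal.
From mathcomp Require Import topology normedtype derive matrix_normedtype.
From mathcomp Require Import ring lra.
Set Implicit Arguments. Unset Strict Implicit. Unset Printing Implicit Defensive.
Import Order.TTheory GRing.Theory Num.Theory numFieldTopology.Exports numFieldNormedType.Exports.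
Local Open Scope classical_set_scope.
Local Open Scope ring_scope.

(* Write [r := u - u_NN] and let [w] range over the signed secants [+-w_j].  The
   constraints [<z, Pi w> - <r, w> - eps/60 |r| <= 0] are affine in [z] and the
   ball [|z| <= |r|] is compact and convex, so minimising the sum of their squared
   positive parts over the ball shows that they are jointly satisfiable as soon as
   every nonnegative combination of them is.  For weights [p] put
   [v := sum_i p_i w_i]: convex hull distortion applied to [v / sum_i p_i] gives
   [|v| <= |Pi v| + eps/60 sum_i p_i], and [z := - |r| / |Pi v| * Pi v] makes the
   combination at most [- |r| |Pi v| + |r| |v| - eps/60 |r| sum_i p_i <= 0].
   The remaining margin [eps/60 |r|] turns the [eps/30] of [gtilde] into the
   required [- eps/60 |r|]. *)

Section EuclideanGeometry.
Variable R : realType.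
Implicit Types (n : nat).

Lemma dotvC n (u v : 'cV[R]_n) : dotv u v = dotv v u.
Proof. by apply: eq_bigr => i _; rewrite mulrC. Qed.

Lemma dotvDl n (u v x : 'cV[R]_n) : dotv (u + v) x = dotv u x + dotv v x.
Proof. by rewrite /dotv -big_split; apply: eq_bigr => i _; rewrite mxE mulrDl. Qed.

Lemma dotvZl n c (u x : 'cV[R]_n) : dotv (c *: u) x = c * dotv u x.
Proof. by rewrite /dotv mulr_sumr; apply: eq_bigr => i _; rewrite mxE mulrA. Qed.

Lemma dotvNl n (u x : 'cV[R]_n) : dotv (- u) x = - dotv u x.
Proof. by rewrite -scaleN1r dotvZl mulN1r. Qed.

Lemma dotvBl n (u v x : 'cV[R]_n) : dotv (u - v) x = dotv u x - dotv v x.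
Proof. by rewrite dotvDl dotvNl. Qed.

Lemma dotvDr n (u v x : 'cV[R]_n) : dotv x (u + v) = dotv x u + dotv x v.
Proof. by rewrite dotvC dotvDl !(dotvC x). Qed.

Lemma dotvZr n c (u x : 'cV[R]_n) : dotv x (c *: u) = c * dotv x u.
Proof. by rewrite dotvC dotvZl dotvC. Qed.

Lemma dotvNr n (u x : 'cV[R]_n) : dotv x (- u) = - dotv x u.
Proof. by rewrite dotvC dotvNl dotvC. Qed.

Lemma dotvBr n (u v x : 'cV[R]_n) : dotv x (u - v) = dotv x u - dotv x v.
Proof. by rewrite dotvDr dotvNr. Qed.

Lemma dotv0l n (x : 'cV[R]_n) : dotv 0 x = 0.
Proof. by rewrite /dotv big1 // => i _; rewrite mxE mul0r. Qed.

Lemma dotv_sumr n (I : finType) (x : 'cV[R]_n) (f : I -> 'cV[R]_n) :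
  dotv x (\sum_i f i) = \sum_i dotv x (f i).
Proof.
apply: (big_morph (dotv x)); first by move=> u v; exact: dotvDr.
by rewrite dotvC dotv0l.
Qed.

Lemma dotv_ge0 n (u : 'cV[R]_n) : 0 <= dotv u u.
Proof. by apply: sumr_ge0 => i _; rewrite -expr2 sqr_ge0. Qed.

Lemma dotv_eq0 n (u : 'cV[R]_n) : (dotv u u == 0) = (u == 0).
Proof.
apply/idP/eqP => [|->]; last by rewrite dotv0l.
rewrite psumr_eq0 => [/allP u0|i _]; last by rewrite -expr2 sqr_ge0.
apply/matrixP => i j; rewrite (ord1 j) mxE.
by apply/eqP; rewrite -sqrf_eq0 expr2; apply: u0; rewrite mem_index_enum.
Qed.

Lemma enorm_ge0 n (u : 'cV[R]_n) : 0 <= enorm u.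
Proof. exact: sqrtr_ge0. Qed.

Lemma enorm_sqr n (u : 'cV[R]_n) : enorm u ^+ 2 = dotv u u.
Proof. by rewrite sqr_sqrtr // dotv_ge0. Qed.

Lemma enorm0 n : enorm (0 : 'cV[R]_n) = 0.
Proof. by rewrite /enorm dotv0l sqrtr0. Qed.

Lemma enormZ n c (u : 'cV[R]_n) : enorm (c *: u) = `|c| * enorm u.
Proof.
by rewrite /enorm dotvZl dotvZr mulrA -expr2 sqrtrM ?sqr_ge0 // sqrtr_sqr.
Qed.

Lemma enormN n (u : 'cV[R]_n) : enorm (- u) = enorm u.
Proof. by rewrite -scaleN1r enormZ normrN normr1 mul1r. Qed.

Lemma enorm_le n (u : 'cV[R]_n) rho :
  0 <= rho -> (enorm u <= rho) = (dotv u u <= rho ^+ 2).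
Proof. by move=> rho0; rewrite -enorm_sqr ler_sqr ?nnegrE ?enorm_ge0. Qed.

Lemma CauchySchwarz n (u v : 'cV[R]_n) : dotv u v <= enorm u * enorm v.
Proof.
have [->|u0] := eqVneq u 0; first by rewrite dotv0l enorm0 mul0r.
have [->|v0] := eqVneq v 0; first by rewrite dotvC dotv0l enorm0 mulr0.
have pos_enorm (x : 'cV[R]_n) : x != 0 -> 0 < enorm x.
  by move=> x0; rewrite sqrtr_gt0 lt_def dotv_eq0 x0 dotv_ge0.
have /pos_enorm nu := u0; have /pos_enorm nv := v0.
have := dotv_ge0 (enorm v *: u - enorm u *: v).
rewrite !(dotvBl, dotvBr, dotvZl, dotvZr) (dotvC v u) -!enorm_sqr => h.
have : 0 <= 2 * (enorm u * enorm v) * (enorm u * enorm v - dotv u v) by nra.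
by rewrite pmulr_rge0 ?subr_ge0 // mulr_gt0 // mulr_gt0.
Qed.

Lemma enormD_le n (u v : 'cV[R]_n) : enorm (u + v) <= enorm u + enorm v.
Proof.
rewrite enorm_le ?addr_ge0 ?enorm_ge0 //.
rewrite dotvDl !dotvDr (dotvC v u) -!enorm_sqr.
by have := CauchySchwarz u v; lra.
Qed.

End EuclideanGeometry.

Section PenaltyDescent.
Variable R : realType.

Definition posp (x : R) := Num.max x 0.

Lemma posp_ge0 x : 0 <= posp x.
Proof. by rewrite le_max lexx orbT. Qed.

Lemma posp_gt0 x : (0 < posp x) = (0 < x).
Proof. by rewrite lt_max ltxx orbF. Qed.

Lemma posp_mulr x : posp x * x = posp x ^+ 2.
Proof. by rewrite /posp; case: (lerP x 0) => _; rewrite ?mul0r ?expr0n ?expr2. Qed.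

Lemma posp_sqrD_le x y t : 0 <= t ->
  posp (x + t * y) ^+ 2 <= posp x ^+ 2 + 2 * t * posp x * y + t ^+ 2 * y ^+ 2.
Proof.
by rewrite /posp => t0; case: (lerP (x + t * y) 0); case: (lerP x 0);
  rewrite ?expr0n /=; nra.
Qed.

Lemma penalty_descent n (gz gy : 'I_n -> R) :
  \sum_i posp (gz i) * gy i <= 0 -> (exists i, 0 < gz i) ->
  exists2 t, 0 < t <= 1 &
    \sum_i posp (gz i + t * (gy i - gz i)) ^+ 2 < \sum_i posp (gz i) ^+ 2.
Proof.
move=> avg_le0 [i0 gz_i0].
pose P := \sum_i posp (gz i) ^+ 2.
pose Y := \sum_i (gy i - gz i) ^+ 2.
have P_gt0 : 0 < P.
  rewrite /P (bigD1 i0) //= ltr_pwDl ?exprn_gt0 ?posp_gt0 //.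
  by rewrite sumr_ge0 // => i _; rewrite sqr_ge0.
have Y_ge0 : 0 <= Y by rewrite sumr_ge0 // => i _; rewrite sqr_ge0.
have slope : \sum_i posp (gz i) * (gy i - gz i) = \sum_i posp (gz i) * gy i - P.
  by rewrite -sumrB; apply: eq_bigr => i _; rewrite mulrBr posp_mulr.
pose t := P / (Y + P).
have tYP : t * (Y + P) = P by rewrite mulfVK // gt_eqF // ltr_wpDl.
have t_gt0 : 0 < t by rewrite divr_gt0 // ltr_wpDl.
exists t; first by rewrite t_gt0 ler_pdivrMr ?ltr_wpDl // mul1r lerDr.
apply: (le_lt_trans (ler_sum _ (fun i _ => posp_sqrD_le (gz i) (gy i - gz i) (ltW t_gt0)))).
rewrite !big_split /= -/P -mulr_sumr -/Y.
rewrite (eq_bigr (fun i => 2 * t * (posp (gz i) * (gy i - gz i)))); last first.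
  by move=> i _; rewrite mulrA.
rewrite -mulr_sumr slope; nra.
Qed.

End PenaltyDescent.

Section JointFeasibility.
Variables (R : realType) (V : normedModType R) (n : nat).
Variables (A : set V) (g : 'I_n -> V -> R).
Hypothesis A_neq0 : A !=set0.
Hypothesis A_compact : compact A.
Hypothesis A_convex :
  forall y z t, A y -> A z -> 0 <= t <= 1 -> A (z + t *: (y - z)).
Hypothesis g_continuous : forall i, continuous (g i).
Hypothesis g_affine :
  forall i y z t, g i (z + t *: (y - z)) = g i z + t * (g i y - g i z).

Lemma continuous_penalty : continuous (fun v => \sum_i posp (g i v) ^+ 2 : R^o).
Proof.
apply: continuous_big; first exact: add_continuous.
move=> i _ v.
have posp_g : {for v, continuous (fun v => posp (g i v) : R^o)}.
  by apply: (@continuous_max R _ (g i) (fun=> 0)); [exact: g_continuous|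
             exact: cst_continuous].
exact: (cvgM posp_g posp_g).
Qed.

(* A minimiser of the penalty [\sum_i posp (g i v) ^+ 2] over [A] satisfies every
   constraint, since otherwise [penalty_descent] would improve it. *)
Lemma joint_feasibility :
  (forall p : 'I_n -> R, (forall i, 0 <= p i) -> 0 < \sum_i p i ->
     exists2 y, A y & \sum_i p i * g i y <= 0) ->
  exists2 z, A z & forall i, g i z <= 0.
Proof.
move=> averaged_feasible.
have [z /set_mem Az z_min] := compact_EVT_min A_neq0 A_compact
  (continuous_subspaceT continuous_penalty).
exists z => // i; rewrite leNgt; apply/negP => gz_i.
pose p j := posp (g j z).
have p_sum_gt0 : 0 < \sum_j p j.
  rewrite (bigD1 i) //= ltr_pwDl ?posp_gt0 //.
  by rewrite sumr_ge0 // => j _; exact: posp_ge0.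
have [y Ay avg_le0] := averaged_feasible p (fun j => posp_ge0 _) p_sum_gt0.
have [t /andP [t_gt0 t_le1] descent] :=
  penalty_descent avg_le0 (ex_intro _ i gz_i).
have Azt : A (z + t *: (y - z)) by apply: A_convex; rewrite ?(ltW t_gt0).
have := z_min _ (mem_set Azt); rewrite /= leNgt.
by under eq_bigr do rewrite g_affine; rewrite descent.
Qed.

End JointFeasibility.

(* Compactness of bounded closed sets is available in the library for row vectors
   only, hence the transposes. *)
Section EuclideanBall.
Variables (R : realType) (m : nat).

Definition row_eball (rho : R) := [set v : 'rV[R]_m | enorm v^T <= rho].

Lemma continuous_dotv_trmx (c : 'cV[R]_m) (b : R) :
  continuous (fun v : 'rV[R]_m => dotv v^T c + b : R^o).
Proof.
have dot_cont : continuous (fun v : 'rV[R]_m => dotv v^T c : R^o).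
  rewrite /dotv; under eq_fun do under eq_bigr do rewrite mxE.
  apply: continuous_big; first exact: add_continuous.
  move=> k _ v; apply: continuousM; first exact: coord_continuous.
  exact: cst_continuous.
by move=> v; apply: (@continuousD _ _ _ (fun v => dotv v^T c) (fun=> b));
  [exact: dot_cont | exact: cst_continuous].
Qed.

Lemma continuous_dotv_trmx_diag :
  continuous (fun v : 'rV[R]_m => dotv v^T v^T : R^o).
Proof.
rewrite /dotv; under eq_fun do under eq_bigr do rewrite !mxE.
apply: continuous_big; first exact: add_continuous.
by move=> k _ v; apply: continuousM; exact: coord_continuous.
Qed.

Lemma row_eball_compact rho : 0 <= rho -> compact (row_eball rho).
Proof.
move=> rho0; apply: bounded_closed_compact.
  apply: filterS (nbhs_pinfty_ge (num_real rho)) => M rhoM v.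
  rewrite /row_eball /= enorm_le // => vv_le.
  rewrite [X in X <= _]/Num.norm /= mx_normrE.
  apply: bigmax_le => [|[i j] _ /=]; first exact: le_trans rhoM.
  rewrite (ord1 i); apply: le_trans rhoM.
  suff : `|v 0 j| ^+ 2 <= rho ^+ 2 by rewrite ler_sqr ?nnegrE.
  apply: le_trans vv_le; rewrite /dotv (bigD1 j) //= !mxE -expr2 real_normK ?num_real //.
  by rewrite lerDl sumr_ge0 // => k _; rewrite !mxE -expr2 sqr_ge0.
have -> : row_eball rho = (fun v => dotv v^T v^T : R^o) @^-1` [set x | x <= rho ^+ 2].
  by apply/seteqP; split => v; rewrite /row_eball /= enorm_le.
apply: preimage_closed; last exact: closed_le.
by move=> v _; exact: continuous_dotv_trmx_diag.
Qed.

Lemma row_eball_convex rho y z t : row_eball rho y -> row_eball rho z ->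
  0 <= t <= 1 -> row_eball rho (z + t *: (y - z)).
Proof.
rewrite /row_eball /= => yB zB /andP [t0 t1].
have -> : (z + t *: (y - z))^T = (1 - t) *: z^T + t *: y^T.
  rewrite linearD linearZ /= linearB /= scalerBl scale1r scalerBr.
  by rewrite addrCA addrC.
apply: le_trans (enormD_le _ _) _; rewrite !enormZ !ger0_norm ?subr_ge0 //.
nra.
Qed.

Lemma eball_affine_feasibility n (rho : R) (a : 'I_n -> 'cV[R]_m) (b : 'I_n -> R) :
  0 <= rho ->
  (forall p : 'I_n -> R, (forall i, 0 <= p i) -> 0 < \sum_i p i ->
     exists2 z, enorm z <= rho & \sum_i p i * (dotv z (a i) + b i) <= 0) ->
  exists2 z, enorm z <= rho & forall i, dotv z (a i) + b i <= 0.
Proof.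
move=> rho0 averaged_feasible.
have [|||i|i y z t|p p_ge0 S_gt0|y y_le g_le0] :=
  @joint_feasibility _ _ _ (row_eball rho) (fun i v => dotv v^T (a i) + b i).
- by exists 0; rewrite /row_eball /= trmx0 enorm0.
- exact: row_eball_compact.
- exact: row_eball_convex.
- exact: continuous_dotv_trmx.
- by rewrite linearD linearZ linearB /= dotvDl dotvZl dotvBl; ring.
- have [z z_le z_avg] := averaged_feasible p p_ge0 S_gt0.
  by exists z^T; rewrite /row_eball /= trmxK.
- by exists y^T.
Qed.

End EuclideanBall.

Section DistortionCertificate.
Variables (R : realType) (d m k : nat).

Lemma convhull_normalised_combination (T : set 'cV[R]_d) (t : 'I_k -> 'cV[R]_d)
    (p : 'I_k -> R) :
  (forall i, T (t i)) -> (forall i, 0 <= p i) -> 0 < \sum_i p i ->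
  convhull T ((\sum_i p i)^-1 *: \sum_i p i *: t i).
Proof.
move=> Tt p_ge0 S_gt0; exists k, (fun i => p i / \sum_j p j), t; split => //.
- by move=> i; rewrite divr_ge0 // ltW.
- by rewrite -mulr_suml divff // gt_eqF.
- by rewrite scaler_sumr; apply: eq_bigr => i _; rewrite scalerA mulrC.
Qed.

Lemma exists_antialigned (x : 'cV[R]_m) (rho : R) : 0 <= rho ->
  exists2 z, enorm z <= rho & dotv z x = - (rho * enorm x).
Proof.
move=> rho0; have [x0|x_neq0] := eqVneq (enorm x) 0.
  by exists 0; rewrite ?enorm0 // dotv0l x0 mulr0 oppr0.
have x_gt0 : 0 < enorm x by rewrite lt_def x_neq0 enorm_ge0.
exists (- (rho / enorm x) *: x).
  by rewrite enormZ normrN ger0_norm ?divr_ge0 ?enorm_ge0 // divfK.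
by rewrite dotvZl -enorm_sqr; field.
Qed.

Lemma cvx_hull_distortion_certificate (Pi : 'M[R]_(m, d)) (eta : R)
    (T : set 'cV[R]_d) (t : 'I_k -> 'cV[R]_d) (r : 'cV[R]_d) (p : 'I_k -> R) :
  cvx_hull_distortion Pi eta T -> (forall i, T (t i)) ->
  (forall i, 0 <= p i) -> 0 < \sum_i p i ->
  exists2 z : 'cV[R]_m, enorm z <= enorm r &
    \sum_i p i * (dotv z (Pi *m t i) - dotv r (t i)) <= eta * enorm r * \sum_i p i.
Proof.
move=> distortion Tt p_ge0 S_gt0.
set S := \sum_i p i in S_gt0 *; pose v := \sum_i p i *: t i.
have v_le : enorm v <= enorm (Pi *m v) + eta * S.
  have := distortion _ (convhull_normalised_combination Tt p_ge0 S_gt0).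
  rewrite -/S -/v -scalemxAr !enormZ [`|S^-1|]gtr0_norm ?invr_gt0 //.
  rewrite -mulrBr mulrC ltr_norml ltr_pdivlMr // => /andP [lower _]; lra.
have [z z_le z_Piv] := exists_antialigned (Pi *m v) (enorm_ge0 r).
exists z => //.
have -> : \sum_i p i * (dotv z (Pi *m t i) - dotv r (t i)) =
    dotv z (Pi *m v) - dotv r v.
  rewrite mulmx_sumr !dotv_sumr -sumrB; apply: eq_bigr => i _.
  by rewrite -scalemxAr !dotvZr mulrBr.
have := CauchySchwarz (- r) v; rewrite dotvNl enormN z_Piv.
have := enorm_ge0 r; nra.
Qed.

End DistortionCertificate.

Lemma secantsN (R : realType) d (X : set 'cV[R]_d) w :
  secants X w -> secants X (- w).
Proof.
move=> w_sec e e_gt0; have [v [x [y [Xx Xy xy v_def]]] close] := w_sec e e_gt0.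
exists ((enorm (y - x))^-1 *: (y - x)); first by exists y, x; split => //; exact/nesym.
by rewrite -(opprB x y) enormN scalerN -v_def -opprD enormN.
Qed.

Theorem lemma4p3 (R : realType) (d m l : nat) (X : set 'cV[R]_d)
    (eps : R) (w : 'I_l -> 'cV[R]_d) (Pi : 'M[R]_(m, d)) :
  (0%E < reach X)%E ->
  0 < eps < 1 ->
  (forall j, secants X (w j)) ->
  cvx_hull_distortion Pi (eps / 60) (secants X) ->
  forall u, tube X u ->
  exists z : 'cV[R]_m,
    enorm z <= enorm (u - nnpt X u) /\
    forall i : 'I_(l + l),
      gtilde Pi w eps X i z u <= - (eps / 60) * enorm (u - nnpt X u).
Proof.
move=> _ _ w_sec distortion u _; set r := u - nnpt X u.
pose t i := match split i with inl j => w j | inr j => - w j end.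
have t_sec i : secants X (t i).
  by rewrite /t; case: split => j; [exact: w_sec | exact/secantsN].
have [p p_ge0 S_gt0|z z_le z_feasible] := @eball_affine_feasibility _ _ _ (enorm r)
    (fun i => Pi *m t i) (fun i => - (dotv r (t i) + eps / 60 * enorm r)) (enorm_ge0 r).
  have [z z_le z_cert] := cvx_hull_distortion_certificate r distortion t_sec p_ge0 S_gt0.
  exists z => //; under eq_bigr do rewrite opprD addrA mulrBr.
  by rewrite sumrB -mulr_suml subr_le0 mulrC.
have eps30 : eps / 30 * enorm r = eps / 60 * enorm r + eps / 60 * enorm r by field.
exists z; split => // i; have := z_feasible i.
rewrite /gtilde /= -/r eps30 mulNr /t; set c := eps / 60 * enorm r.
clearbody c; by case: split => j; rewrite ?mulmxN ?dotvNr; lra.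
Qed.
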